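(* Let $|\psi\rangle$ be an $N$-qubit state and $|\psi'\rangle$ an $n$-qubit state with $N\ge n$, such that $|\psi\rangle$ can be transformed into $|\psi'\rangle|0\rangle^{\otimes(N-n)}$ (with $|\psi'\rangle$ on some set of $n$ of the qubits) by stochastic local operations and classical communication (SLOCC) with non-zero probability. Then $\chi_{\mathrm{wd}}(|\psi\rangle)\ge\chi_{\mathrm{wd}}(|\psi'\rangle)$. Consequently, the Schmidt-rank width is both a type I and a type II entanglement monotone.
   Context: A subcubic tree is a tree with all vertex degrees in $\{1,3\}$; its degree-1 vertices are leaves. For an $N$-qubit state $|\psi\rangle$ on $V=\{1,\dots,N\}$, consider subcubic trees $T$ with $N$ leaves identified with the qubits; deleting an edge $e$ of $T$ induces a bipartition $(A^e_T,B^e_T)$ of $V$. Let $\chi_{A,B}(|\psi\rangle)=\mathrm{rank}(\rho_A)$, $\rho_A=\mathrm{Tr}_B|\psi\rangle\langle\psi|$ (the Schmidt rank). The Schmidt-rank width is $\chi_{\mathrm{wd}}(|\psi\rangle)=\min_T\max_{e\in T}\log_2\chi_{A^e_T,B^e_T}(|\psi\rangle)$. A type I entanglement monotone is a functional $M$ such that for every LOCC protocol on $n$ qubits mapping $|\psi\rangle$ to $n$-qubit states $|\psi_i\rangle$ with probabilities $p_i$, $M(|\psi\rangle)\ge\sum_ip_iM(|\psi_i\rangle)$. Write $|\psi\rangle\geq_{\mathrm{LOCC}}|\phi\rangle$ ($N$-qubit $|\psi\rangle$, $n$-qubit $|\phi\rangle$, $n\le N$) if for some set $A$ of $n$ qubits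 $|\psi\rangle\to|\phi\rangle^A|0\rangle^{\bar A}$ is achievable exactly with probability one by LOCC; a type II entanglement monotone is a functional $E$ on all multi-qubit states with $E(|\psi\rangle)\ge E(|\psi'\rangle)$ whenever $|\psi\rangle\geq_{\mathrm{LOCC}}|\psi'\rangle$. *)

From HB Require Import structures.
From mathcomp Require Import all_boot all_order all_algebra.
From mathcomp Require Import boolp reals exp.
From mathcomp Require Import complex.

Set Implicit Arguments.
Unset Strict Implicit.
Unset Printing Implicit Defensive.
Import Order.TTheory GRing.Theory Num.Theory.
Local Open Scope ring_scope.

Section QuantumDefs.
Variable R : realType.
Local Notation C := (R[i]).

Definition config (N : nat) := {ffun 'I_N -> bool}.
(* An (unnormalized) vector of the N-qubit Hilbert space (C^2)^{\otimes N}. *)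
Definition qstate (N : nat) := {ffun config N -> C}.

Definition sqmod (z : C) : R := (complex.Re z) ^+ 2 + (complex.Im z) ^+ 2.
Definition norm2 N (psi : qstate N) : R := \sum_x sqmod (psi x).
Definition normalized N (psi : qstate N) := norm2 psi = 1.

Definition partA N (A : {set 'I_N}) := {ffun {i : 'I_N | i \in A} -> bool}.

Definition merge N (A : {set 'I_N}) (a : partA A) (b : partA (~: A)) : config N :=
  [ffun i => match (insub i : option {j : 'I_N | j \in A}) with
             | Some s => a s
             | None => match (insub i : option {j : 'I_N | j \in ~: A}) with
                       | Some t => b t
                       | None => false
                       end
             end].

(* reduced density matrix rho_A = Tr_B |psi><psi| *)
Definition rhoA N (psi : qstate N) (A : {set 'I_N}) : 'M[C]_(#|{: partA A}|) :=
  \matrix_(r, c) \sum_(b : partA (~: A))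
      psi (merge (enum_val r) b) * (psi (merge (enum_val c) b))^*.

Definition schmidt_rank N (psi : qstate N) (A : {set 'I_N}) : nat := \rank (rhoA psi A).

(* vertex set 'I_m, adjacency relation adj, leaf labelling lab : qubits -> vertices *)
Definition degree m (adj : rel 'I_m) (v : 'I_m) : nat := #|[set w | adj v w]|.

Definition remove_edge m (adj : rel 'I_m) (u v : 'I_m) : rel 'I_m :=
  fun x y => adj x y && ~~ (((x == u) && (y == v)) || ((x == v) && (y == u))).

Definition is_tree m (adj : rel 'I_m) : Prop :=
  [/\ (0 < m)%N, symmetric adj, irreflexive adj,
      (forall x y, connect adj x y) &
      (forall u v, adj u v -> ~~ connect (remove_edge adj u v) u v)].

(* Subcubic tree whose leaves are identified with the qubits 1..N.
   Degrees are in {1,3}; the one-vertex tree (N = 1, a single leaf of degree 0)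
   is also admitted. Leaves = vertices of degree <= 1. *)
Definition subcubic_tree N m (adj : rel 'I_m) (lab : 'I_N -> 'I_m) : Prop :=
  [/\ is_tree adj,
      (forall v, [|| degree adj v == 1%N, degree adj v == 3%N | m == 1%N]),
      injective lab &
      (forall v, (degree adj v <= 1)%N <-> exists q, lab q = v)].

Definition side N m (adj : rel 'I_m) (lab : 'I_N -> 'I_m) (u v : 'I_m) : {set 'I_N} :=
  [set q | connect (remove_edge adj u v) u (lab q)].

(* max over edges of the Schmidt rank (the maximum of log2 is log2 of the maximum);
   1 is the neutral value (Schmidt ranks of nonzero vectors are >= 1). *)
Definition tree_width N (psi : qstate N) m (adj : rel 'I_m) (lab : 'I_N -> 'I_m) : nat :=
  \big[maxn/1%N]_(e : 'I_m * 'I_m | adj e.1 e.2) schmidt_rank psi (side adj lab e.1 e.2).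

Definition width_achievable N (psi : qstate N) (k : nat) : Prop :=
  exists m (adj : rel 'I_m) (lab : 'I_N -> 'I_m),
    subcubic_tree adj lab /\ tree_width psi adj lab = k.

Definition min_width N (psi : qstate N) : nat :=
  match pselect (exists k, `[< width_achievable psi k >]) with
  | left h => ex_minn h
  | right _ => 0%N
  end.

Definition log2 (x : R) : R := ln x / ln 2.

Definition chi_wd N (psi : qstate N) : R := log2 (min_width psi)%:R.

Definition bidx (b : bool) : 'I_2 := if b then ord_max else ord0.

(* action of the product operator  O_1 (x) ... (x) O_N  on a state *)
Definition apply_local N (Op : {ffun 'I_N -> 'M[C]_2}) (psi : qstate N) : qstate N :=
  [ffun x : config N => \sum_(y : config N)
               (\prod_(j < N) Op j (bidx (x j)) (bidx (y j))) * psi y].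

Definition adjoint (M : 'M[C]_2) : 'M[C]_2 := (map_mx Num.conj M)^T.

(* LOCC protocols on N qubits (no ancillas): a finite tree of rounds; in each
   round one party k performs a local measurement with Kraus operators
   M_0..M_{m-1}, broadcasts the outcome, and the rest of the protocol may
   depend on all outcomes so far. *)
Inductive locc (N : nat) : Type :=
| LDone : locc N
| LMeas (k : 'I_N) (m : nat) (M : 'I_m -> 'M[C]_2) (next : 'I_m -> locc N).

Fixpoint locc_valid N (P : locc N) : Prop :=
  match P with
  | LDone => True
  | LMeas k m M next =>
      \sum_(i < m) adjoint (M i) *m M i = 1%:M /\ forall i, locc_valid (next i)
  end.

(* the branches (outcome sequences) of a protocol, each as the product
   operator accumulated on each qubit (later operations act on the left) *)
Fixpoint branches N (P : locc N) : seq {ffun 'I_N -> 'M[C]_2} :=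
  match P with
  | LDone => [:: [ffun _ => 1%:M]]
  | LMeas k m M next =>
      flatten [seq [seq [ffun j => if j == k then Op j *m M i else Op j]
                   | Op : {ffun 'I_N -> 'M[C]_2} <- branches (next i)] | i <- enum 'I_m]
  end.

Definition branch_prob N (Op : {ffun 'I_N -> 'M[C]_2}) (psi : qstate N) : R :=
  norm2 (apply_local Op psi).
Definition branch_state N (Op : {ffun 'I_N -> 'M[C]_2}) (psi : qstate N) : qstate N :=
  [ffun x : config N => ((Num.sqrt (branch_prob Op psi))^-1)%:C%C * apply_local Op psi x].

(* |phi>^A |0>^{bar A}: the n-qubit state phi placed on the qubits f(0..n-1)
   (f injective), all other qubits in |0> *)
Definition embed n N (f : 'I_n -> 'I_N) (phi : qstate n) : qstate N :=
  [ffun x : config N => if [forall i, (i \notin codom f) ==> ~~ x i]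
             then phi [ffun j => x (f j)] else 0].

Definition slocc_convertible N n (psi : qstate N) (phi : qstate n) : Prop :=
  exists (f : 'I_n -> 'I_N) (P : locc N),
    [/\ injective f, locc_valid P &
        exists2 Op, Op \in branches P &
          branch_prob Op psi > 0 /\ branch_state Op psi = embed f phi].

Definition locc_geq N n (psi : qstate N) (phi : qstate n) : Prop :=
  exists (f : 'I_n -> 'I_N) (P : locc N),
    [/\ injective f, locc_valid P &
        \sum_(Op <- branches P | (branch_prob Op psi > 0) &&
                                `[< branch_state Op psi = embed f phi >])
           branch_prob Op psi = 1].

Definition typeI_monotone (M : forall N, qstate N -> R) : Prop :=
  forall N (psi : qstate N) (P : locc N), normalized psi -> locc_valid P ->
    M N psi >= \sum_(Op <- branches P | branch_prob Op psi > 0)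
                  branch_prob Op psi * M N (branch_state Op psi).

Definition typeII_monotone (E : forall N, qstate N -> R) : Prop :=
  forall N n (psi : qstate N) (phi : qstate n), (n <= N)%N ->
    normalized psi -> normalized phi -> locc_geq psi phi -> E N psi >= E n phi.

End QuantumDefs.

From Pilot Require Import Defs.
From HB Require Import structures.
From mathcomp Require Import all_boot all_order all_algebra.
From mathcomp Require Import boolp reals exp.
From mathcomp Require Import complex.
From mathcomp Require Import zify.
Import Order.TTheory GRing.Theory Num.Theory.

Set Implicit Arguments.
Unset Strict Implicit.
Unset Printing Implicit Defensive.

(* Local operators act on the coefficient matrix [psi (a, b)] of a bipartition
   [(A, B)] as [X |-> L_A X L_B^T], so no branch of a protocol increases a
   Schmidt rank; and the coefficient matrix of [phi] across a bipartition of its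
   qubits is a submatrix of that of [|phi>|0..0>] across any extension of it.
   Given an optimal subcubic tree for [psi], deleting the unlabelled leaves one
   at a time (together with their neighbour, whose two other edges merge) gives
   a subcubic tree for the qubits of [phi] whose edge bipartitions are
   restrictions of edge bipartitions of the original tree.  Type I monotonicity follows because the branch
   probabilities sum to 1, type II because an exact conversion has a
   successful branch. *)

Lemma homo_connect (T1 T2 : finType) (e1 : rel T1) (e2 : rel T2) (g : T1 -> T2) :
  (forall x y, e1 x y -> connect e2 (g x) (g y)) ->
  {homo g : x y / connect e1 x y >-> connect e2 x y}.
Proof.
move=> e12 x y /connectP [s]; elim: s x => [|z s IHs] x /=; first by move=> _ ->.
by case/andP=> exz sz ly; apply: connect_trans (e12 _ _ exz) (IHs _ sz ly).
Qed.

Lemma connect_bij (T1 T2 : finType) (e1 : rel T1) (e2 : rel T2) (h : T1 -> T2) (h' : T2 -> T1) :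
  cancel h h' -> cancel h' h -> (forall x y, e1 x y = e2 (h x) (h y)) ->
  forall x y, connect e1 x y = connect e2 (h x) (h y).
Proof.
move=> hK h'K e12 x y; apply/idP/idP.
  by apply: homo_connect => u v; rewrite e12 => /connect1.
move=> /(homo_connect (g := h') _); rewrite !hK; apply.
by move=> u v euv; apply: connect1; rewrite e12 !h'K.
Qed.

Lemma connect_sink (T : finType) (e : rel T) x y :
  (forall z, ~~ e x z) -> connect e x y -> y = x.
Proof.
move=> sink /connectP [[|z s]] /=; first by move=> _ ->.
by case/andP=> /negP; rewrite (negbTE (sink z)).
Qed.

(* [degree], [remove_edge], [is_tree] and [subcubic_tree] over an arbitrary
   finite vertex type, so that vertices can be deleted and added. *)
Section Trees.
Variable V : finType.
Implicit Types (adj : rel V) (u v : V).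

Definition deg adj v : nat := #|[set w | adj v w]|.

Definition del_edge adj u v : rel V :=
  fun x y => adj x y && ~~ (((x == u) && (y == v)) || ((x == v) && (y == u))).

Definition is_ftree adj : Prop :=
  [/\ (0 < #|V|)%N, symmetric adj, irreflexive adj,
      (forall x y, connect adj x y) &
      (forall u v, adj u v -> ~~ connect (del_edge adj u v) u v)].

(* Unlike [subcubic_ftree], leaves may be unlabelled. *)
Definition subcubic_labelling n adj (lab : 'I_n -> V) : Prop :=
  [/\ is_ftree adj, (forall v, [|| deg adj v == 1, deg adj v == 3 | #|V| == 1]),
      injective lab & (forall q, deg adj (lab q) <= 1)%N].

Definition subcubic_ftree n adj (lab : 'I_n -> V) : Prop :=
  subcubic_labelling adj lab /\ (forall v, (deg adj v <= 1)%N -> exists q, lab q = v).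

Definition on_side n adj (lab : 'I_n -> V) u v (q : 'I_n) : bool :=
  connect (del_edge adj u v) u (lab q).

Lemma del_edge_sym adj u v : symmetric adj -> symmetric (del_edge adj u v).
Proof.
move=> sa x y; rewrite /del_edge sa; congr (_ && ~~ _).
by rewrite orbC; congr (_ || _); rewrite andbC.
Qed.

Lemma del_edgeC adj u v : del_edge adj u v =2 del_edge adj v u.
Proof. by move=> x y; rewrite /del_edge orbC. Qed.

Lemma labelling_card_neq1 n (lab : 'I_n -> V) :
  (1 < n)%N -> injective lab -> #|V| != 1%N.
Proof.
move=> n_gt1 il; apply/negP => /fintype1P [z Vz].
have := il (Ordinal (ltnW n_gt1)) (Ordinal n_gt1).
by rewrite (Vz (lab (Ordinal _))) (Vz (lab (Ordinal n_gt1))) => /(_ erefl) /(congr1 val).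
Qed.

End Trees.

Definition splits_within (V1 V2 : finType) n (adj1 : rel V1) (lab1 : 'I_n -> V1)
    (adj2 : rel V2) (lab2 : 'I_n -> V2) : Prop :=
  forall x y, adj1 x y ->
    exists x2 y2, adj2 x2 y2 /\ on_side adj1 lab1 x y =1 on_side adj2 lab2 x2 y2.

Lemma splits_within_refl (V : finType) n (adj : rel V) (lab : 'I_n -> V) :
  splits_within adj lab adj lab.
Proof. by move=> x y exy; exists x, y. Qed.

Lemma splits_within_trans (V1 V2 V3 : finType) n (adj1 : rel V1) (lab1 : 'I_n -> V1)
    (adj2 : rel V2) (lab2 : 'I_n -> V2) (adj3 : rel V3) (lab3 : 'I_n -> V3) :
  splits_within adj1 lab1 adj2 lab2 -> splits_within adj2 lab2 adj3 lab3 ->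
  splits_within adj1 lab1 adj3 lab3.
Proof.
move=> s12 s23 x y /s12 [x2 [y2 [e2 E2]]].
have [x3 [y3 [e3 E3]]] := s23 _ _ e2.
by exists x3, y3; split=> // q; rewrite E2 E3.
Qed.

(* Delete the unlabelled leaf [l] and its neighbour [p], whose other
   neighbours [a] and [b] become adjacent; [prune] sends [l] and [p] to the
   copy [d] of [a]. *)
Section Prune.
Variables (V : finType) (n : nat) (adj : rel V) (lab : 'I_n -> V) (l p a b : V).
Hypotheses (lab_tree : subcubic_labelling adj lab)
  (adj_l : forall w, adj l w = (w == p))
  (adj_p : forall w, adj p w = [|| w == l, w == a | w == b])
  (l_neq_a : l != a) (l_neq_b : l != b) (a_neq_b : a != b)
  (lab_neq_lp : forall q, (lab q != l) && (lab q != p)).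

Let sa : symmetric adj. Proof. by case: lab_tree => [[]]. Qed.
Let ia : irreflexive adj. Proof. by case: lab_tree => [[]]. Qed.
Let ca : forall x y, connect adj x y. Proof. by case: lab_tree => [[]]. Qed.
Let bridge : forall u v, adj u v -> ~~ connect (del_edge adj u v) u v.
Proof. by case: lab_tree => [[]]. Qed.

Definition kept (v : V) := (v != l) && (v != p).
Local Notation V' := {v : V | kept v}.
Variable d : V'.
Hypothesis val_d : val d = a.

Definition adj_ab : rel V := fun x y =>
  [|| adj x y, (x == a) && (y == b) | (x == b) && (y == a)].
Definition pruned_adj : rel V' := fun x y => adj_ab (val x) (val y).
Definition prune (v : V) : V' := insubd d v.
Definition pruned_lab q := prune (lab q).

Lemma adj_p_a : adj p a. Proof. by rewrite adj_p eqxx orbT. Qed.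
Lemma adj_p_b : adj p b. Proof. by rewrite adj_p eqxx !orbT. Qed.
Lemma adj_to_l u : adj u l = (u == p). Proof. by rewrite sa adj_l. Qed.
Lemma adj_to_p u : adj u p = [|| u == l, u == a | u == b]. Proof. by rewrite sa adj_p. Qed.

Lemma p_eq_a : (p == a) = false.
Proof. by apply/negbTE/eqP => pa; move: adj_p_a; rewrite -pa ia. Qed.
Lemma p_eq_b : (p == b) = false.
Proof. by apply/negbTE/eqP => pb; move: adj_p_b; rewrite -pb ia. Qed.

Lemma kept_a : kept a. Proof. by rewrite /kept eq_sym l_neq_a eq_sym p_eq_a. Qed.
Lemma kept_b : kept b. Proof. by rewrite /kept eq_sym l_neq_b eq_sym p_eq_b. Qed.
Lemma val_eq_p (z : V') : (val z == p) = false.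
Proof. by have /andP [_ /negbTE] := valP z. Qed.
Lemma val_eq_l (z : V') : (val z == l) = false.
Proof. by have /andP [/negbTE] := valP z. Qed.
Lemma p_eq_val (z : V') : (p == val z) = false. Proof. by rewrite eq_sym val_eq_p. Qed.

(* An edge [a -- b] would close the cycle [a -- p -- b]. *)
Lemma not_adj_ab : ~~ adj a b.
Proof.
apply/negP => ab; have := bridge adj_p_b; apply/negP/negPn.
apply: (connect_trans (y := a)); apply: connect1; rewrite /del_edge.
  by rewrite adj_p_a eqxx (negbTE a_neq_b) p_eq_b.
by rewrite ab (eq_sym a p) p_eq_a (negbTE a_neq_b).
Qed.
Lemma not_adj_ba : ~~ adj b a. Proof. by rewrite sa not_adj_ab. Qed.

Lemma prune_val x : prune (val x) = x. Proof. exact: valKd. Qed.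
Lemma prune_dropped v : ~~ kept v -> prune v = d.
Proof. by move=> kv; apply: val_inj; rewrite val_insubd (negbTE kv). Qed.
Lemma val_prune v : kept v -> val (prune v) = v.
Proof. by move=> kv; rewrite val_insubd kv. Qed.
Lemma prune_a : prune a = d. Proof. by apply: val_inj; rewrite val_prune ?val_d ?kept_a. Qed.
Lemma val_pruned_lab q : val (pruned_lab q) = lab q.
Proof. exact: val_prune (lab_neq_lp q). Qed.

(* A path of the pruned tree lifts, rerouting [a -- b] through [p]. *)
Lemma connect_unprune (x0 y0 : V') u v : connect (del_edge pruned_adj x0 y0) u v ->
  connect (del_edge adj (val x0) (val y0)) (val u) (val v).
Proof.
apply: homo_connect => {}u {}v; rewrite /del_edge /pruned_adj /adj_ab -!val_eqE.
case/andP => /or3P [uv|/andP [/eqP -> /eqP ->]|/andP [/eqP -> /eqP ->]] not_del.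
- by apply: connect1; rewrite uv not_del.
- apply: (connect_trans (y := p)); apply: connect1.
    by rewrite adj_to_p eqxx orbT !p_eq_val /= !andbF.
  by rewrite adj_p_b !p_eq_val.
- apply: (connect_trans (y := p)); apply: connect1.
    by rewrite adj_to_p eqxx !orbT !p_eq_val /= !andbF.
  by rewrite adj_p_a !p_eq_val.
Qed.

Lemma connect_unprune_ab (y0 : V') u v : val y0 = b ->
  connect (del_edge pruned_adj d y0) u v -> connect (del_edge adj p b) (val u) (val v).
Proof.
move=> y0b; apply: homo_connect => {}u {}v.
rewrite /del_edge /pruned_adj /adj_ab -!val_eqE val_d y0b.
case/andP => /or3P [uv|/andP [/eqP -> /eqP ->]|/andP [/eqP -> /eqP ->]];
  rewrite ?eqxx ?orbT // => _.
by apply: connect1; rewrite uv !val_eq_p /= andbF.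
Qed.

(* [prune] maps each edge to an edge or a loop. *)
Lemma connect_prune (e : rel V) (e' : rel V') : symmetric e -> symmetric e' ->
    subrel e adj -> (forall u v : V', e (val u) (val v) -> e' u v) ->
    (e p b -> e' d (prune b)) ->
  forall u v, connect e u v -> connect e' (prune u) (prune v).
Proof.
move=> se se' e_adj e_e' e_pb.
have dropped_step u v : e u v -> ~~ kept u -> connect e' (prune u) (prune v).
  move=> euv; have auv := e_adj _ _ euv.
  rewrite negb_and !negbK => /orP [/eqP ul|/eqP up].
    move: auv; rewrite ul adj_l => /eqP ->.
    by rewrite !prune_dropped ?connect0 // /kept ?eqxx ?andbF.
  move: (auv); rewrite up adj_p => /or3P [/eqP ->|/eqP ->|/eqP vb].
  - by rewrite !prune_dropped ?connect0 // /kept ?eqxx ?andbF.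
  - by rewrite prune_a prune_dropped ?connect0 // /kept ?eqxx ?andbF.
  - rewrite vb prune_dropped ?/kept ?eqxx ?andbF //.
    by apply: connect1; apply: e_pb; rewrite -up -vb.
apply: homo_connect => u v euv.
case ku: (kept u); last by apply: dropped_step; rewrite ?ku.
case kv: (kept v); last by rewrite (sym_connect_sym se'); apply: dropped_step; rewrite 1?se ?kv.
by apply: connect1; apply: e_e'; rewrite !val_prune.
Qed.

Lemma pruned_adj_sym : symmetric pruned_adj.
Proof.
move=> x y; rewrite /pruned_adj /adj_ab sa.
by case: (adj _ _); case: (val x == a); case: (val y == b);
  case: (val x == b); case: (val y == a).
Qed.

Lemma pruned_adj_irr : irreflexive pruned_adj.
Proof.
move=> x; rewrite /pruned_adj /adj_ab ia /=; apply/negP.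
by case/orP => /andP [/eqP -> /eqP ba]; move: a_neq_b; rewrite ba eqxx.
Qed.

Lemma pruned_connected x y : connect pruned_adj x y.
Proof.
rewrite -(prune_val x) -(prune_val y); apply: (connect_prune _ _ _ _ _ (ca _ _)) => //.
- exact: pruned_adj_sym.
- by move=> u v uv; rewrite /pruned_adj /adj_ab uv.
- by move=> _; rewrite /pruned_adj /adj_ab val_d val_prune ?kept_b // !eqxx orbT.
Qed.

Lemma pruned_bridge_ab x y : val x = a -> val y = b ->
  ~~ connect (del_edge pruned_adj x y) x y.
Proof.
move=> xa yb; have -> : x = d by apply: val_inj; rewrite xa val_d.
apply/negP => /(connect_unprune_ab yb); rewrite val_d yb => ab.
have := bridge adj_p_b; apply/negP/negPn.
apply: (connect_trans (y := a)) ab; apply: connect1.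
by rewrite /del_edge adj_p_a eqxx (negbTE a_neq_b) p_eq_b.
Qed.

Lemma pruned_bridge x y : pruned_adj x y -> ~~ connect (del_edge pruned_adj x y) x y.
Proof.
case/or3P => [xy|/andP [/eqP xa /eqP yb]|/andP [/eqP xb /eqP ya]].
- by apply/negP => /connect_unprune xy'; move: (bridge xy); rewrite xy'.
- exact: pruned_bridge_ab.
- rewrite (eq_connect (del_edgeC pruned_adj x y)).
  rewrite (sym_connect_sym (del_edge_sym _ _ pruned_adj_sym)).
  exact: pruned_bridge_ab.
Qed.

Lemma card_val_set (P : pred V) :
  #|[set y : V' | P (val y)]| = #|[set w | P w && kept w]|.
Proof.
rewrite -(card_imset _ val_inj); apply: eq_card => w; rewrite inE.
apply/imsetP/idP => [[y]|/andP [Pw kw]]; first by rewrite inE => Py ->; rewrite Py (valP y).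
by exists (Sub w kw); rewrite ?inE SubK.
Qed.

(* At [a] the edge to [p] is traded for the edge to [b], and symmetrically. *)
Lemma deg_pruned_end (x : V') a1 b1 : val x = a1 -> adj p a1 -> kept b1 -> ~~ adj a1 b1 ->
  (forall w, adj_ab a1 w = adj a1 w || (w == b1)) -> deg pruned_adj x = deg adj (val x).
Proof.
move=> xa1 pa1 kb1 nab1 nbrs; rewrite /deg (card_val_set (adj_ab (val x))) xa1.
have -> : [set w | adj_ab a1 w && kept w] = b1 |: ([set w | adj a1 w] :\ p).
  apply/setP => w; rewrite !inE nbrs.
  have [->|wb1] := eqVneq w b1; first by rewrite orbT kb1.
  rewrite orbF; have [->|wp] := eqVneq w p; first by rewrite /kept eqxx /= !andbF.
  rewrite /kept /= wp andbT; case a1w: (adj a1 w) => //=; apply/eqP => wl.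
  by move: a1w; rewrite wl adj_to_l => /eqP a1p; move: pa1; rewrite -a1p ia.
by rewrite cardsU1 !inE (negbTE nab1) andbF [in RHS](cardsD1 p) inE sa pa1.
Qed.

Lemma deg_pruned x : deg pruned_adj x = deg adj (val x).
Proof.
have [xa|xna] := eqVneq (val x) a.
  apply: (deg_pruned_end xa adj_p_a kept_b not_adj_ab) => w.
  by rewrite /adj_ab eqxx (negbTE a_neq_b) /= orbF.
have [xb|xnb] := eqVneq (val x) b.
  apply: (deg_pruned_end xb adj_p_b kept_a not_adj_ba) => w.
  by rewrite /adj_ab eqxx eq_sym (negbTE a_neq_b).
rewrite /deg (card_val_set (adj_ab (val x))); apply: eq_card => w; rewrite !inE.
rewrite /adj_ab (negbTE xna) (negbTE xnb) /= orbF.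
case xw: (adj (val x) w) => //=; apply/andP; split; apply/eqP => wlp; move: xw; rewrite wlp.
  by rewrite adj_to_l val_eq_p.
by rewrite adj_to_p (negbTE xna) (negbTE xnb) val_eq_l.
Qed.

Lemma pruned_ftree : is_ftree pruned_adj.
Proof.
split; [by apply/card_gt0P; exists d | exact: pruned_adj_sym | exact: pruned_adj_irr
       | exact: pruned_connected | exact: pruned_bridge].
Qed.

Lemma on_side_pruned x y : adj (val x) (val y) ->
  on_side pruned_adj pruned_lab x y =1 on_side adj lab (val x) (val y).
Proof.
move=> xy q; apply/idP/idP; first by move/connect_unprune; rewrite val_pruned_lab.
move=> side_q; rewrite /on_side -[x in connect _ x]prune_val.
apply: (connect_prune _ _ _ _ _ side_q).
- exact: del_edge_sym.
- exact: (del_edge_sym _ _ pruned_adj_sym).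
- by move=> u v /andP [].
- by move=> u v; rewrite /del_edge /pruned_adj /adj_ab -!val_eqE => /andP [-> ->].
- move=> _; rewrite /del_edge /pruned_adj /adj_ab val_d val_prune ?kept_b //.
  rewrite !eqxx orbT /= -!val_eqE val_d val_prune ?kept_b //.
  apply/negP; case/orP => /andP [/eqP xa /eqP yb]; move: xy; rewrite -xa -yb.
    by rewrite (negbTE not_adj_ab).
  by rewrite (negbTE not_adj_ba).
Qed.

Lemma on_side_pruned_ab x y : val x = a -> val y = b ->
  on_side pruned_adj pruned_lab x y =1 on_side adj lab p b.
Proof.
move=> xa yb q; have xd : x = d by apply: val_inj; rewrite xa val_d.
apply/idP/idP.
  rewrite /on_side xd => /(connect_unprune_ab yb); rewrite val_d val_pruned_lab.
  apply: connect_trans; apply: connect1.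
  by rewrite /del_edge adj_p_a eqxx (negbTE a_neq_b) p_eq_b.
move=> side_q; rewrite /on_side.
suff: connect (del_edge pruned_adj x y) (prune p) (pruned_lab q).
  by rewrite prune_dropped -?xd // /kept eqxx andbF.
apply: (connect_prune _ _ _ _ _ side_q).
- exact: del_edge_sym.
- exact: (del_edge_sym _ _ pruned_adj_sym).
- by move=> u v /andP [].
- move=> u v; rewrite /del_edge /pruned_adj /adj_ab -!val_eqE xa yb => /andP [uv _].
  rewrite uv; apply/negP; case/orP => /andP [/eqP ua /eqP vb]; move: uv; rewrite ua vb.
    by rewrite (negbTE not_adj_ab).
  by rewrite (negbTE not_adj_ba).
- by rewrite /del_edge !eqxx /= andbF.
Qed.

Lemma card_neq1_of_leaf : #|V| != 1%N.
Proof.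
apply/negP => /fintype1P [z Vz].
by move: (adj_l p); rewrite eqxx (Vz l) (Vz p) (ia z).
Qed.

Lemma card_pruned : (#|{: V'}| < #|V|)%N.
Proof.
rewrite card_sig; apply: proper_card; apply/properP; split.
  by apply/subsetP.
by exists l; rewrite // inE /kept eqxx.
Qed.

Lemma pruned_subcubic : subcubic_labelling pruned_adj pruned_lab.
Proof.
case: lab_tree => _ deg13 il lab_leaf; split.
- exact: pruned_ftree.
- move=> x; rewrite deg_pruned; move: (deg13 (val x)).
  by rewrite (negbTE card_neq1_of_leaf) !orbF => /orP [->|->]; rewrite ?orbT.
- by move=> q1 q2 /(congr1 val); rewrite !val_pruned_lab => /il.
- by move=> q; rewrite deg_pruned val_pruned_lab.
Qed.

End Prune.

Arguments pruned_adj [V] adj l p a b _ _.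

Section LeafNeighbourhood.
Variables (V : finType) (n : nat) (adj : rel V) (lab : 'I_n -> V) (l : V).
Hypotheses (n_gt1 : (1 < n)%N) (lab_tree : subcubic_labelling adj lab)
  (leaf_l : (deg adj l <= 1)%N) (l_unlab : l \notin codom lab).

Let sa : symmetric adj. Proof. by case: lab_tree => [[]]. Qed.
Let ca : forall x y, connect adj x y. Proof. by case: lab_tree => [[]]. Qed.
Let il : injective lab. Proof. by case: lab_tree. Qed.
Let lab_leaf q : (deg adj (lab q) <= 1)%N. Proof. by case: lab_tree. Qed.

Let deg13 v : (deg adj v == 1%N) || (deg adj v == 3%N).
Proof.
case: lab_tree => _ /(_ v) + _ _.
by rewrite (negbTE (labelling_card_neq1 n_gt1 il)) orbF.
Qed.

Lemma deg_nbrs1 v : deg adj v = 1%N -> exists w, forall u, adj v u = (u == w).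
Proof.
move=> /eqP /cards1P [w Nw]; exists w => u.
by have := congr1 (fun S : {set V} => u \in S) Nw; rewrite !inE.
Qed.

Lemma lab_neq_leaf q : lab q != l.
Proof. by apply: contraNneq l_unlab => <-; apply: codom_f. Qed.

(* If both [l] and its neighbour [p] were leaves, [{l, p}] would be a
   component containing at least two labels. *)
Lemma leaf_parent_deg3 p : (forall w, adj l w = (w == p)) -> deg adj p = 3%N.
Proof.
move=> adj_l; case/orP: (deg13 p) => /eqP // /deg_nbrs1 [z adj_p].
have zl : z = l by apply/eqP; rewrite eq_sym -adj_p sa adj_l.
have lp_closed : closed adj (mem [set l; p]).
  apply: (intro_closed (sym_connect_sym sa)) => u w uw.
  rewrite !inE => /orP [/eqP ul|/eqP up]; move: uw.
    by rewrite ul adj_l => ->; rewrite orbT.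
  by rewrite up adj_p zl => ->.
have in_lp q : lab q == p.
  have := closed_connect lp_closed (ca l (lab q)).
  by rewrite !inE eqxx (negbTE (lab_neq_leaf q)) => /esym.
have := in_lp (Ordinal (ltnW n_gt1)); rewrite -(eqP (in_lp (Ordinal n_gt1))).
by move=> /eqP /il /(congr1 val).
Qed.

Lemma leaf_neighbourhood : exists p a b,
  [/\ forall w, adj l w = (w == p), forall w, adj p w = [|| w == l, w == a | w == b],
      l != a, l != b & a != b].
Proof.
have [p adj_l] : exists p, forall w, adj l w = (w == p).
  by apply: deg_nbrs1; case/orP: (deg13 l) leaf_l => /eqP ->.
have adj_pl : adj p l by rewrite sa adj_l.
have : #|[set w | adj p w] :\ l| == 2%N.
  have := cardsD1 l [set w | adj p w]; rewrite inE adj_pl -/(deg adj p).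
  by rewrite (leaf_parent_deg3 adj_l) add1n => -[<-].
case/cards2P => a [b [a_neq_b nbrs]].
have in_nbrs w : (w \in [set a; b]) = (w != l) && adj p w by rewrite -nbrs !inE.
exists p, a, b; split => //.
- move=> w; have [->|wl] := eqVneq w l; first by rewrite adj_pl.
  by move: (in_nbrs w); rewrite !inE wl.
- by move: (in_nbrs a); rewrite !inE eqxx /= eq_sym => /esym /andP [].
- by move: (in_nbrs b); rewrite !inE eqxx orbT eq_sym => /esym /andP [].
Qed.

Theorem prune_leaf : exists (V' : finType) (adj' : rel V') (lab' : 'I_n -> V'),
  [/\ (#|V'| < #|V|)%N, subcubic_labelling adj' lab' & splits_within adj' lab' adj lab].
Proof.
have [p [a [b [adj_l adj_p la lb ab]]]] := leaf_neighbourhood.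
have lab_kept q : kept l p (lab q).
  rewrite /kept lab_neq_leaf /=; apply: contraTneq (lab_leaf q) => ->.
  by rewrite (leaf_parent_deg3 adj_l).
have adj_p' w : adj p w = [|| w == l, w == b | w == a] by rewrite adj_p (orbC (w == a)).
pose da : {v | kept l p v} := Sub a (kept_a lab_tree adj_p la).
pose db : {v | kept l p v} := Sub b (kept_a lab_tree adj_p' lb).
have lab_ab : pruned_lab lab da =1 pruned_lab lab db.
  by move=> q; apply: val_inj; rewrite /pruned_lab /prune !val_insubd lab_kept.
have adj_ab_ba : pruned_adj adj l p a b =2 pruned_adj adj l p b a.
  by move=> x y; rewrite /pruned_adj /adj_ab; congr (_ || _); apply: orbC.
exists _, (pruned_adj adj l p a b), (pruned_lab lab da); split.
- exact: card_pruned.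
- exact: (pruned_subcubic lab_tree adj_l adj_p la lb ab lab_kept (SubK _ _)).
move=> x y; case/or3P => [xy|/andP [/eqP xa /eqP yb]|/andP [/eqP xb /eqP ya]].
- exists (val x), (val y); split=> //.
  exact: (on_side_pruned lab_tree adj_l adj_p la lb ab lab_kept (SubK _ _)).
- exists p, b; split; first by rewrite adj_p eqxx !orbT.
  exact: (on_side_pruned_ab lab_tree adj_l adj_p la ab lab_kept (SubK _ _)).
- exists p, a; split; first by rewrite adj_p eqxx orbT.
  move=> q; rewrite /on_side lab_ab.
  rewrite (eq_connect (e' := del_edge (pruned_adj adj l p b a) x y)); last first.
    by move=> u v; rewrite /del_edge adj_ab_ba.
  by apply: (on_side_pruned_ab lab_tree adj_l adj_p' lb _ lab_kept (SubK _ _)); rewrite // eq_sym.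
Qed.

End LeafNeighbourhood.

Theorem prune_unlabelled_leaves n (V : finType) (adj : rel V) (lab : 'I_n -> V) :
  (1 < n)%N -> subcubic_labelling adj lab ->
  exists (V' : finType) (adj' : rel V') (lab' : 'I_n -> V'),
    subcubic_ftree adj' lab' /\ splits_within adj' lab' adj lab.
Proof.
move=> n_gt1; have [k] := ubnP #|V|; elim: k => // k IHk in V adj lab * => V_lt lab_tree.
case: (pickP [pred v | (deg adj v <= 1)%N && (v \notin codom lab)]) => [l|all_lab].
  case/andP => leaf_l l_unlab.
  have [V' [adj' [lab' [lt' tree' sp']]]] := prune_leaf n_gt1 lab_tree leaf_l l_unlab.
  have [V'' [adj'' [lab'' [tree'' sp'']]]] := IHk V' adj' lab' (leq_trans lt' V_lt) tree'.
  by exists V'', adj'', lab''; split; last exact: splits_within_trans sp'' sp'.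
exists V, adj, lab; split; last exact: splits_within_refl.
split=> // v leaf_v; move: (all_lab v); rewrite /= leaf_v => /negbFE /codomP [q ->].
by exists q.
Qed.

Section Enumerate.
Variables (V : finType) (n : nat) (adj : rel V) (lab : 'I_n -> V).

Definition ord_adj : rel 'I_#|V| := fun x y => adj (enum_val x) (enum_val y).
Definition ord_lab q : 'I_#|V| := enum_rank (lab q).

Lemma connect_ord_adj (e : rel V) (x y : 'I_#|V|) :
  connect (fun u v : 'I_#|V| => e (enum_val u) (enum_val v)) x y =
    connect e (enum_val x) (enum_val y).
Proof. exact: (connect_bij enum_valK enum_rankK). Qed.

Lemma connect_remove_ord_adj x y u v : connect (remove_edge ord_adj x y) u v =
  connect (del_edge adj (enum_val x) (enum_val y)) (enum_val u) (enum_val v).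
Proof.
rewrite -connect_ord_adj; apply: eq_connect => a b.
by rewrite /remove_edge /del_edge /ord_adj !(inj_eq enum_val_inj).
Qed.

Lemma degree_ord_adj v : degree ord_adj v = deg adj (enum_val v).
Proof.
rewrite /degree /deg -(card_imset _ enum_val_inj); apply: eq_card => w; rewrite inE.
apply/imsetP/idP => [[z] /[!inE] vz ->//|vw].
by exists (enum_rank w); rewrite ?inE /ord_adj enum_rankK.
Qed.

Lemma side_ord x y :
  side ord_adj ord_lab x y = [set q | on_side adj lab (enum_val x) (enum_val y) q].
Proof.
by apply/setP => q; rewrite !inE connect_remove_ord_adj /ord_lab enum_rankK.
Qed.

Lemma subcubic_tree_ord : subcubic_ftree adj lab -> subcubic_tree ord_adj ord_lab.
Proof.
case=> [[[V_gt0 sa ia ca ba] deg13 il lab_leaf] leaf_lab]; split.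
- split=> //.
  + by move=> x y; rewrite /ord_adj sa.
  + by move=> x; rewrite /ord_adj ia.
  + by move=> x y; rewrite connect_ord_adj.
  + by move=> u v uv; rewrite connect_remove_ord_adj; apply: ba.
- by move=> v; rewrite degree_ord_adj.
- by move=> q1 q2 /enum_rank_inj /il.
- move=> v; rewrite degree_ord_adj; split.
    by case/leaf_lab => q lab_q; exists q; rewrite /ord_lab lab_q enum_valK.
  by case=> q <-; rewrite /ord_lab enum_rankK.
Qed.

End Enumerate.

Lemma subcubic_tree_labelling N n m (adj : rel 'I_m) (lab : 'I_N -> 'I_m) (f : 'I_n -> 'I_N) :
  subcubic_tree adj lab -> injective f -> subcubic_labelling adj (lab \o f).
Proof.
case=> [[m_gt0 sa ia ca ba] deg13 il leaf_lab] inj_f; split.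
- by split; rewrite ?card_ord.
- by move=> v; rewrite card_ord; apply: deg13.
- exact: inj_comp.
- by move=> q; apply/leaf_lab; exists (f q).
Qed.

Theorem restrict_subcubic_tree N n m (adj : rel 'I_m) (lab : 'I_N -> 'I_m) (f : 'I_n -> 'I_N) :
  subcubic_tree adj lab -> injective f -> (1 < n)%N ->
  exists m' (adj' : rel 'I_m') (lab' : 'I_n -> 'I_m'), subcubic_tree adj' lab' /\
    forall x y, adj' x y -> exists u v,
      adj u v /\ side adj' lab' x y = [set q | f q \in side adj lab u v].
Proof.
move=> tree inj_f n_gt1.
have [V' [adj' [lab' [tree' sp]]]] :=
  prune_unlabelled_leaves n_gt1 (subcubic_tree_labelling tree inj_f).
exists #|V'|, (ord_adj adj'), (ord_lab lab'); split; first exact: subcubic_tree_ord.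
move=> x y /sp [u [v [uv side_uv]]]; exists u, v; split=> //.
by rewrite side_ord; apply/setP => q; rewrite !inE side_uv.
Qed.

Lemma card_set_sum (T1 T2 : finType) (P : pred (T1 + T2)) :
  #|[set w | P w]| = (#|[set x | P (inl x)]| + #|[set y | P (inr y)]|)%N.
Proof.
by rewrite -!sum1_card big_sumType; congr (_ + _)%N; apply: eq_bigl => x; rewrite !inE.
Qed.

Lemma subcubic_ftree_bool :
  subcubic_ftree (fun x y : bool => x != y) (fun q : 'I_2 => val q == 1%N).
Proof.
have deg1 (v : bool) : deg (fun x y => x != y) v = 1%N.
  rewrite /deg (_ : [set w | v != w] = [set ~~ v]) ?cards1 //.
  by apply/setP => -[] /[!inE]; case: v.
split; first split.
- split.
  + by rewrite card_bool.
  + by move=> x y; rewrite eq_sym.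
  + by move=> x; rewrite eqxx.
  + by move=> x y; have [->|xy] := eqVneq x y; [apply: connect0 | apply: connect1].
  + move=> u v uv; apply/negP => /connect_sink vu.
    suff eq_vu : v = u by move: uv; rewrite eq_vu eqxx.
    by apply: vu => z; rewrite /del_edge; move: uv; case: u; case: v; case: z.
- by move=> v; rewrite deg1.
- by move=> [[|[|?]] ?] [[|[|?]] ?] //= _; apply: val_inj.
- by move=> q; rewrite deg1.
- by move=> [] _; [exists (Ordinal (isT : (1 < 2)%N)) | exists (Ordinal (isT : (0 < 2)%N))].
Qed.

(* Grafting two new leaves onto the leaf [lab q0]; the new leaves carry the
   labels [q0] and [N]. *)
Section Graft.
Variables (V : finType) (N : nat) (adj : rel V) (lab : 'I_N -> V) (q0 : 'I_N).
Hypotheses (N_gt1 : (1 < N)%N) (lab_tree : subcubic_ftree adj lab).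
Local Notation v0 := (lab q0).

Let sa : symmetric adj. Proof. by case: lab_tree => [[[]]]. Qed.
Let il : injective lab. Proof. by case: lab_tree => [[]]. Qed.

Let deg13 v : (deg adj v == 1%N) || (deg adj v == 3%N).
Proof.
case: lab_tree => [[_ /(_ v) + _ _] _].
by rewrite (negbTE (labelling_card_neq1 N_gt1 il)) orbF.
Qed.

Lemma deg_v0 : deg adj v0 = 1%N.
Proof. by case: lab_tree => [[_ _ _ /(_ q0)]]; case/orP: (deg13 v0) => /eqP ->. Qed.

Definition graft_adj : rel (V + bool) := fun x y =>
  match x, y with
  | inl u, inl v => adj u v
  | inl u, inr _ => u == v0
  | inr _, inl v => v == v0
  | inr _, inr _ => false
  end.

Definition graft_lab (q : 'I_N.+1) : V + bool :=
  match unlift ord_max q with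
  | Some q' => if q' == q0 then inr false else inl (lab q')
  | None => inr true
  end.

Lemma graft_adj_sym : symmetric graft_adj.
Proof. by case=> [u|c] [v|c'] //=; rewrite sa. Qed.

Lemma deg_graft_inl v : deg graft_adj (inl v) = (deg adj v + (v == v0) * 2)%N.
Proof.
rewrite /deg card_set_sum /=; congr (_ + _)%N.
case: (v == v0); rewrite ?cardsT ?card_bool //.
by rewrite (_ : [set _ | false] = set0) ?cards0 //; apply/setP.
Qed.

Lemma deg_graft_inr c : deg graft_adj (inr c) = 1%N.
Proof.
rewrite /deg card_set_sum /= (_ : [set _ | false] = set0) ?cards0 ?addn0; last by apply/setP.
by rewrite (_ : [set x | x == v0] = [set v0]) ?cards1 //; apply/setP => x; rewrite !inE.
Qed.

Lemma graft_ftree : is_ftree graft_adj.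
Proof.
case: lab_tree => [[[_ _ ia ca ba] _ _ _] _].
have connect_inl u v : connect adj u v -> connect graft_adj (inl u) (inl v).
  by apply: (homo_connect (g := inl)) => {}u {}v uv; apply: connect1.
have connect_v0 x : connect graft_adj x (inl v0).
  by case: x => [u|c]; [apply: connect_inl | apply: connect1 => /=].
split.
- by apply/card_gt0P; exists (inr true).
- exact: graft_adj_sym.
- by case=> [u|c] //=; rewrite ia.
- move=> x y; apply: connect_trans (connect_v0 x) _.
  by rewrite (sym_connect_sym graft_adj_sym).
case=> [u|c] [v|c'] //= uv.
- apply/negP => path_uv; move/negP: (ba u v uv); apply.
  apply: (homo_connect (g := fun z => if z is inl w then w else v0) _ path_uv).
  case=> [x|cx] [y|cy] //= step; first exact: connect1.
    by case/andP: step => /eqP ->.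
  by case/andP: step => /eqP ->.
- move/eqP: uv => ->; rewrite (sym_connect_sym (del_edge_sym _ _ graft_adj_sym)).
  apply/negP => /connect_sink sink; suff : inl v0 = inr c' :> V + bool by [].
  by apply: sink => -[w|c''] //=; rewrite /del_edge /= eqxx (inj_eq inl_inj); case: (w == v0).
- move/eqP: uv => ->; apply/negP => /connect_sink sink.
  suff : inl v0 = inr c :> V + bool by [].
  by apply: sink => -[w|c''] //=; rewrite /del_edge /= eqxx (inj_eq inl_inj); case: (w == v0).
Qed.

Lemma graft_lab_lift q : q != q0 -> graft_lab (lift ord_max q) = inl (lab q).
Proof. by move=> qq0; rewrite /graft_lab liftK (negbTE qq0). Qed.

Lemma graft_subcubic : subcubic_ftree graft_adj graft_lab.
Proof.
case: lab_tree => [[_ _ _ lab_leaf] leaf_lab]; split; first split.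
- exact: graft_ftree.
- case=> [v|c]; last by rewrite deg_graft_inr.
  rewrite deg_graft_inl; have [->|vv0] := eqVneq v v0; first by rewrite deg_v0.
  by rewrite mul0n addn0 orbA deg13.
- move=> q1 q2; rewrite /graft_lab.
  case: unliftP => [q1'|] ->; case: unliftP => [q2'|] -> //=.
  + by case: eqVneq => [->|_]; case: eqVneq => [->|_] // [/il ->].
  + by case: eqP.
  + by case: eqP.
- move=> q; rewrite /graft_lab; case: unliftP => [q'|] _; last by rewrite deg_graft_inr.
  case: eqVneq => [_|q'q0]; first by rewrite deg_graft_inr.
  by rewrite deg_graft_inl (inj_eq il) (negbTE q'q0) addn0 lab_leaf.
- case=> [v|[]].
  + rewrite deg_graft_inl; have [->|vv0] := eqVneq v v0; first by rewrite deg_v0.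
    rewrite mul0n addn0 => /leaf_lab [q lab_q].
    have qq0 : q != q0 by apply: contraNneq vv0 => qq0; rewrite -lab_q qq0.
    by exists (lift ord_max q); rewrite graft_lab_lift // lab_q.
  + by exists ord_max; rewrite /graft_lab unlift_none.
  + by exists (lift ord_max q0); rewrite /graft_lab liftK eqxx.
Qed.

End Graft.

Lemma exists_subcubic_ftree N : (1 < N)%N ->
  exists (V : finType) (adj : rel V) (lab : 'I_N -> V), subcubic_ftree adj lab.
Proof.
elim: N => // N IHN; rewrite ltnS leq_eqVlt => /orP [/eqP <-|N_gt1].
  by exists bool, (fun x y => x != y), (fun q : 'I_2 => val q == 1%N); apply: subcubic_ftree_bool.
have [V [adj [lab tree]]] := IHN N_gt1; pose q0 : 'I_N := Ordinal (ltnW N_gt1).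
by exists (V + bool)%type, (graft_adj adj lab q0), (graft_lab lab q0); apply: graft_subcubic.
Qed.

Lemma exists_subcubic_tree N : (1 < N)%N ->
  exists m (adj : rel 'I_m) (lab : 'I_N -> 'I_m), subcubic_tree adj lab.
Proof.
move=> /exists_subcubic_ftree [V [adj [lab tree]]].
by exists #|V|, (ord_adj adj), (ord_lab lab); apply: subcubic_tree_ord.
Qed.

Local Open Scope ring_scope.

(* [Defs.merge] is qualified because [merge] also names the merge of [path]. *)
Section Bipartition.
Variables (N : nat) (A : {set 'I_N}).

Definition restr_cfg (S : {set 'I_N}) (x : config N) : partA S := [ffun s => x (val s)].

Lemma merge_in (a : partA A) (b : partA (~: A)) s : Defs.merge a b (val s) = a s.
Proof. by rewrite /Defs.merge ffunE valK. Qed.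

Lemma merge_notin (a : partA A) (b : partA (~: A)) t : Defs.merge a b (val t) = b t.
Proof. by rewrite /Defs.merge ffunE insubN ?valK //; have := valP t; rewrite inE. Qed.

Lemma restr_cfg_merge_in a b : restr_cfg A (Defs.merge a b) = a.
Proof. by apply/ffunP => s; rewrite ffunE merge_in. Qed.

Lemma restr_cfg_merge_notin a b : restr_cfg (~: A) (Defs.merge a b) = b.
Proof. by apply/ffunP => t; rewrite ffunE merge_notin. Qed.

Lemma merge_restr_cfg x : Defs.merge (restr_cfg A x) (restr_cfg (~: A) x) = x.
Proof.
apply/ffunP => i; have [iA|iAc] := boolP (i \in A).
  have := merge_in (restr_cfg A x) (restr_cfg (~: A) x) (Sub i iA).
  by rewrite SubK => ->; rewrite ffunE SubK.
have iAc' : i \in ~: A by rewrite inE.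
have := merge_notin (restr_cfg A x) (restr_cfg (~: A) x) (Sub i iAc').
by rewrite SubK => ->; rewrite ffunE SubK.
Qed.

Lemma sum_config_merge (V : nmodType) (F : config N -> V) :
  \sum_(x : config N) F x = \sum_(a : partA A) \sum_(b : partA (~: A)) F (Defs.merge a b).
Proof.
rewrite pair_big /= (reindex (fun ab : partA A * partA (~: A) => Defs.merge ab.1 ab.2)) //.
exists (fun x => (restr_cfg A x, restr_cfg (~: A) x)) => [[a b] _|x _] /=.
  by rewrite restr_cfg_merge_in restr_cfg_merge_notin.
exact: merge_restr_cfg.
Qed.

Lemma prod_ord_split (V : comPzSemiRingType) (G : 'I_N -> V) :
  \prod_(j < N) G j =
    (\prod_(s : {i | i \in A}) G (val s)) * \prod_(t : {i | i \in ~: A}) G (val t).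
Proof.
rewrite (bigID (fun j => j \in A)) /= -!big_sub; congr (_ * _).
by apply: eq_bigl => j; rewrite inE.
Qed.

End Bipartition.

Section ConjugateTranspose.
Variable C : numClosedFieldType.
Local Open Scope sesquilinear_scope.

Lemma mulmx_trmxC_eq0 p q (X : 'M[C]_(p, q)) : X *m X ^t* = 0 -> X = 0.
Proof.
move=> XX0; apply/matrixP => i j; rewrite mxE.
have /eqP := congr1 (fun M : 'M[C]_p => M i i) XX0; rewrite !mxE.
rewrite psumr_eq0 => [/allP /(_ j (mem_index_enum j))|k _]; last first.
  by rewrite !mxE mul_conjC_ge0.
by rewrite !mxE mul_conjC_eq0 => /eqP.
Qed.

(* The kernels of [X X^*] and [X] coincide, since [u X X^* = 0] forces
   [(u X) (u X)^* = 0]. *)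
Lemma mxrank_mulmx_trmxC p q (X : 'M[C]_(p, q)) : \rank (X *m X ^t*) = \rank X.
Proof.
apply/eqP; rewrite eqn_leq mxrankM_maxl /=.
have ker_sub : (kermx (X *m X ^t*) <= kermx X)%MS.
  rewrite sub_kermx; apply/eqP/mulmx_trmxC_eq0.
  have : (kermx (X *m X ^t*) <= kermx (X *m X ^t*))%MS by [].
  rewrite sub_kermx mulmxA => /eqP kerXX.
  by rewrite trmx_mul map_mxM mulmxA -(mulmxA _ X) mulmxA kerXX mul0mx.
have := mxrankS ker_sub; rewrite !mxrank_ker.
by have := rank_leq_row X; have := rank_leq_row (X *m X ^t*); lia.
Qed.

End ConjugateTranspose.

Section CoefficientMatrix.
Variable R : realType.
Local Notation C := (R[i]).
Local Open Scope sesquilinear_scope.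

Definition coef_mx N (psi : qstate R N) (A : {set 'I_N}) :
    'M[C]_(#|{: partA A}|, #|{: partA (~: A)}|) :=
  \matrix_(r, c) psi (Defs.merge (enum_val r) (enum_val c)).

Lemma sum_enum_val (T : finType) (V : nmodType) (F : T -> V) :
  \sum_(t : T) F t = \sum_(k < #|{: T}|) F (enum_val k).
Proof. by rewrite (reindex (@enum_val T predT)) //; apply: onW_bij; apply: enum_val_bij. Qed.

Lemma rhoA_coef_mx N (psi : qstate R N) A : rhoA psi A = coef_mx psi A *m (coef_mx psi A) ^t*.
Proof.
by apply/matrixP => r c; rewrite !mxE sum_enum_val; apply: eq_bigr => k _; rewrite !mxE.
Qed.

Lemma schmidt_rank_coef_mx N (psi : qstate R N) A : schmidt_rank psi A = \rank (coef_mx psi A).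
Proof. by rewrite /schmidt_rank rhoA_coef_mx mxrank_mulmx_trmxC. Qed.

(* The tensor product of the operators [Op i], [i \in S], as a matrix on [partA S]. *)
Definition local_part_mx N (Op : {ffun 'I_N -> 'M[C]_2}) (S : {set 'I_N}) :
    'M[C]_#|{: partA S}| :=
  \matrix_(r, r') \prod_(s : {i | i \in S})
      Op (val s) (bidx ((enum_val r : partA S) s)) (bidx ((enum_val r' : partA S) s)).

Lemma coef_mx_apply_local N (Op : {ffun 'I_N -> 'M[C]_2}) (psi : qstate R N) A :
  coef_mx (apply_local Op psi) A =
    local_part_mx Op A *m coef_mx psi A *m (local_part_mx Op (~: A))^T.
Proof.
apply/matrixP => r c; rewrite !mxE ffunE (sum_config_merge A) sum_enum_val.
under eq_bigr => k _ do rewrite sum_enum_val.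
rewrite exchange_big /=; apply: eq_bigr => k _.
rewrite !mxE mulr_suml; apply: eq_bigr => k' _.
rewrite !mxE (prod_ord_split A) mulrAC; congr (_ * _ * _); apply: eq_bigr => s _.
  by rewrite !merge_in.
by rewrite !merge_notin.
Qed.

Lemma schmidt_rank_branch_state N (Op : {ffun 'I_N -> 'M[C]_2}) (psi : qstate R N) A :
  (schmidt_rank (branch_state Op psi) A <= schmidt_rank psi A)%N.
Proof.
rewrite !schmidt_rank_coef_mx.
have -> : coef_mx (branch_state Op psi) A =
    ((Num.sqrt (branch_prob Op psi))^-1)%:C%C *: coef_mx (apply_local Op psi) A.
  by apply/matrixP => r c; rewrite !mxE ffunE.
apply: leq_trans (mxrank_scale _ _) _.
rewrite coef_mx_apply_local; apply: leq_trans (mxrankM_maxl _ _) _.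
exact: mxrankM_maxr.
Qed.

End CoefficientMatrix.

Section Embedding.
Variables (R : realType) (n N : nat) (f : 'I_n -> 'I_N) (phi : qstate R n) (A : {set 'I_N}).
Hypothesis inj_f : injective f.
Local Notation A' := [set i | f i \in A].

Definition embed_cfg (y : config n) : config N :=
  [ffun j => if [pick i | f i == j] is Some i then y i else false].

Lemma embed_cfg_f y i : embed_cfg y (f i) = y i.
Proof. by rewrite ffunE; case: pickP => [i' /eqP /inj_f -> //|/(_ i)]; rewrite eqxx. Qed.

Lemma embed_cfg_out y j : j \notin codom f -> embed_cfg y j = false.
Proof.
by move=> j_out; rewrite ffunE; case: pickP => // i /eqP fij; rewrite -fij codom_f in j_out.
Qed.

Lemma embed_embed_cfg y : embed f phi (embed_cfg y) = phi y.
Proof.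
rewrite ffunE; have -> : [forall i, (i \notin codom f) ==> ~~ embed_cfg y i].
  by apply/forallP => i; apply/implyP => /embed_cfg_out ->.
by congr (phi _); apply/ffunP => i; rewrite ffunE embed_cfg_f.
Qed.

Definition embed_part (a : partA A') : partA A :=
  restr_cfg A (embed_cfg (Defs.merge a [ffun => false])).
Definition embed_part_notin (b : partA (~: A')) : partA (~: A) :=
  restr_cfg (~: A) (embed_cfg (Defs.merge [ffun => false] b)).

Lemma embed_cfg_merge a b :
  embed_cfg (Defs.merge a b) = Defs.merge (embed_part a) (embed_part_notin b).
Proof.
rewrite -(merge_restr_cfg A (embed_cfg _)); congr Defs.merge; apply/ffunP => s;
  rewrite !ffunE; case: pickP => // i /eqP fis.
  have iA : i \in A' by rewrite inE fis (valP s).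
  have := merge_in a b (Sub i iA); have := merge_in a [ffun=> false] (Sub i iA).
  by rewrite !SubK => -> ->.
have iA : i \in ~: A' by rewrite !inE fis; have := valP s; rewrite inE.
have := merge_notin a b (Sub i iA); have := merge_notin [ffun=> false] b (Sub i iA).
by rewrite !SubK => -> ->.
Qed.

(* The coefficient matrix of [phi] is a submatrix of that of its embedding. *)
Lemma schmidt_rank_embed : (schmidt_rank phi A' <= schmidt_rank (embed f phi) A)%N.
Proof.
rewrite !schmidt_rank_coef_mx.
pose row (r : 'I_#|{: partA A'}|) := enum_rank (embed_part (enum_val r)).
pose col (c : 'I_#|{: partA (~: A')}|) := enum_rank (embed_part_notin (enum_val c)).
have -> : coef_mx phi A' = rowsub row (colsub col (coef_mx (embed f phi) A)).
  by apply/matrixP => r c; rewrite !mxE !enum_rankK -embed_cfg_merge embed_embed_cfg.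
rewrite rowsubE; apply: leq_trans (mxrankM_maxr _ _) _.
by rewrite -[X in (\rank (colsub _ X) <= _)%N]mulmx1 -mulmx_colsub mxrankM_maxl.
Qed.

End Embedding.

Section LocalOperators.
Variable R : realType.
Local Notation C := (R[i]).
Local Notation ops N := {ffun 'I_N -> 'M[C]_2}.

Lemma bidx_inj : injective bidx.
Proof. by case; case. Qed.

Lemma sum_bool_bidx (V : nmodType) (F : 'I_2 -> V) :
  \sum_(b : bool) F (bidx b) = \sum_(k < 2) F k.
Proof.
rewrite (reindex bidx) //; exists (fun k : 'I_2 => val k == 1%N) => [[] //|k _].
by apply: val_inj; case: k => [[|[|?]] ?].
Qed.

Lemma prod_mx1_bidx N (x y : config N) :
  \prod_(j < N) (1%:M : 'M[C]_2) (bidx (x j)) (bidx (y j)) = (x == y)%:R.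
Proof.
have [->|xy] := eqVneq x y; first by apply: big1 => j _; rewrite mxE eqxx.
have : ~~ [forall j, x j == y j].
  by apply: contra xy => /forallP xy; apply/eqP/ffunP => j; apply/eqP.
rewrite negb_forall => /existsP [j xyj].
by rewrite (bigD1 j) //= mxE (inj_eq bidx_inj) (negbTE xyj) mul0r.
Qed.

Lemma apply_local1 N (psi : qstate R N) : apply_local [ffun _ => 1%:M] psi = psi.
Proof.
apply/ffunP => x; rewrite ffunE.
have ops1 (y : config N) :
    \prod_(j < N) ([ffun _ => 1%:M] : ops N) j (bidx (x j)) (bidx (y j)) = (x == y)%:R.
  by rewrite -prod_mx1_bidx; apply: eq_bigr => j _; rewrite ffunE.
under eq_bigr => y _ do rewrite ops1.
rewrite (bigD1 x) //= eqxx mul1r big1 ?addr0 // => y /negbTE.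
by rewrite eq_sym => ->; rewrite mul0r.
Qed.

Lemma apply_localM N (O1 O2 : ops N) (psi : qstate R N) :
  apply_local O1 (apply_local O2 psi) = apply_local [ffun j => O1 j *m O2 j] psi.
Proof.
apply/ffunP => x; rewrite !ffunE.
under eq_bigr => y _ do rewrite ffunE big_distrr /=.
rewrite exchange_big /=; apply: eq_bigr => z _.
under eq_bigr => y _ do rewrite mulrA -big_split /=.
rewrite -mulr_suml; congr (_ * _).
rewrite -(bigA_distr_bigA (fun j (b : bool) =>
  O1 j (bidx (x j)) (bidx b) * O2 j (bidx b) (bidx (z j)))) /=.
by apply: eq_bigr => j _; rewrite ffunE mxE -sum_bool_bidx.
Qed.

Definition qdot N (u v : qstate R N) : C := \sum_x (u x)^* * v x.

Lemma qdot_apply_local N (O : ops N) (u v : qstate R N) :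
  qdot (apply_local O u) v = qdot u (apply_local [ffun j => adjoint (O j)] v).
Proof.
rewrite /qdot; under eq_bigr => x _ do rewrite ffunE rmorph_sum big_distrl /=.
rewrite exchange_big; apply: eq_bigr => y _ /=; rewrite ffunE big_distrr /=.
apply: eq_bigr => x _; rewrite rmorphM rmorph_prod /= -mulrA mulrCA; congr (_ * (_ * _)).
by apply: eq_bigr => j _; rewrite ffunE /adjoint !mxE.
Qed.

Lemma norm2_qdot N (psi : qstate R N) : (norm2 psi)%:C%C = qdot psi psi.
Proof.
rewrite /norm2 /qdot raddf_sum; apply: eq_bigr => x _.
exact: etrans (add_Re2_Im2 (psi x)) (normCKC (psi x)).
Qed.

Definition at_qubit N (k : 'I_N) (X : 'M[C]_2) : ops N := [ffun j => if j == k then X else 1%:M].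

Lemma prod_at_qubit N (k : 'I_N) X (x y : config N) :
  \prod_(j < N) at_qubit k X j (bidx (x j)) (bidx (y j)) =
  X (bidx (x k)) (bidx (y k)) * \prod_(j < N | j != k) (1%:M : 'M[C]_2) (bidx (x j)) (bidx (y j)).
Proof.
rewrite (bigD1 k) //= ffunE eqxx; congr (_ * _).
by apply: eq_bigr => j /negbTE jk; rewrite ffunE jk.
Qed.

Lemma sum_qdot_at_qubit N (k : 'I_N) m (M : 'I_m -> 'M[C]_2) (psi : qstate R N) :
  \sum_(i < m) qdot psi (apply_local (at_qubit k (M i)) psi) =
  qdot psi (apply_local (at_qubit k (\sum_(i < m) M i)) psi).
Proof.
rewrite /qdot exchange_big /=; apply: eq_bigr => x _.
rewrite -big_distrr /= ffunE; congr (_ * _).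
under eq_bigr => i _ do rewrite ffunE.
rewrite exchange_big /=; apply: eq_bigr => y _.
rewrite prod_at_qubit; under eq_bigr => i _ do rewrite prod_at_qubit.
by rewrite -!mulr_suml summxE.
Qed.

Lemma norm2_at_qubit N (k : 'I_N) X (psi : qstate R N) :
  (norm2 (apply_local (at_qubit k X) psi))%:C%C =
    qdot psi (apply_local (at_qubit k (adjoint X *m X)) psi).
Proof.
rewrite norm2_qdot qdot_apply_local apply_localM; congr (qdot _ (apply_local _ _)).
apply/ffunP => j; rewrite !ffunE; case: (j == k) => //.
by rewrite mulmx1; apply/matrixP => r c; rewrite /adjoint !mxE conjC_nat eq_sym.
Qed.

Lemma sum_norm2_measure N (k : 'I_N) m (M : 'I_m -> 'M[C]_2) (psi : qstate R N) :
  \sum_(i < m) adjoint (M i) *m M i = 1%:M ->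
  \sum_(i < m) norm2 (apply_local (at_qubit k (M i)) psi) = norm2 psi.
Proof.
move=> complete; apply: (@complexI R); rewrite raddf_sum /=.
under eq_bigr => i _ do rewrite norm2_at_qubit.
rewrite sum_qdot_at_qubit complete norm2_qdot; congr (qdot _ _).
rewrite -[in RHS](apply_local1 psi); congr apply_local.
by apply/ffunP => j; rewrite !ffunE; case: (j == k).
Qed.

Lemma sum_branch_prob N (P : locc R N) : locc_valid P ->
  forall psi : qstate R N, \sum_(Op <- branches P) branch_prob Op psi = norm2 psi.
Proof.
elim: P => [|k m M next IHnext] /=.
  by move=> _ psi; rewrite big_seq1 /branch_prob apply_local1.
case=> complete valid_next psi; rewrite big_flatten big_map /=.
under eq_bigr => i _ do rewrite big_map.
have extend (Op : ops N) X : [ffun j => if j == k then Op j *m X else Op j] =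
    [ffun j => Op j *m at_qubit k X j].
  by apply/ffunP => j; rewrite !ffunE; case: (j == k); rewrite ?mulmx1.
under eq_bigr => i _ do under eq_bigr => Op _ do rewrite /branch_prob extend -apply_localM.
under eq_bigr => i _ do rewrite (IHnext i (valid_next i)).
by rewrite big_enum /= sum_norm2_measure.
Qed.

Lemma branch_prob_ge0 N (Op : ops N) (psi : qstate R N) : 0 <= branch_prob Op psi.
Proof. by apply: sumr_ge0 => x _; rewrite /sqmod addr_ge0 ?sqr_ge0. Qed.

End LocalOperators.

Section SchmidtRankWidth.
Variable R : realType.

Lemma min_width_le N (psi : qstate R N) k : width_achievable psi k -> (min_width psi <= k)%N.
Proof.
move=> ach_k; rewrite /min_width; case: pselect => [ex|[]]; last by exists k; apply/asboolP.
by case: ex_minnP => m _; apply; apply/asboolP.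
Qed.

Lemma min_width_achieved N (psi : qstate R N) :
  (exists k, width_achievable psi k) -> width_achievable psi (min_width psi).
Proof.
case=> k ach_k; rewrite /min_width; case: pselect => [ex|[]]; last by exists k; apply/asboolP.
by case: ex_minnP => m /asboolP.
Qed.

Lemma min_width_eq0 N (psi : qstate R N) :
  ~ (exists k, width_achievable psi k) -> min_width psi = 0%N.
Proof.
move=> no_tree; rewrite /min_width; case: pselect => // ex.
by case: no_tree; case: ex => k /asboolP ach_k; exists k.
Qed.

Lemma tree_width_ge1 N (psi : qstate R N) m (adj : rel 'I_m) lab :
  (1 <= tree_width psi adj lab)%N.
Proof.
by rewrite /tree_width; elim/big_rec: _ => // e x _ x_ge1; rewrite leq_max x_ge1 orbT.
Qed.

Lemma schmidt_rank_le_tree_width N (psi : qstate R N) m (adj : rel 'I_m) lab u v : adj u v ->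
  (schmidt_rank psi (side adj lab u v) <= tree_width psi adj lab)%N.
Proof. by move=> uv; rewrite /tree_width (bigD1 (u, v)) ?leq_maxl. Qed.

Lemma tree_width_le N (psi : qstate R N) m (adj : rel 'I_m) lab k : (1 <= k)%N ->
  (forall u v, adj u v -> schmidt_rank psi (side adj lab u v) <= k)%N ->
  (tree_width psi adj lab <= k)%N.
Proof.
move=> k_ge1 ranks_le; rewrite /tree_width.
by elim/big_ind: _ => // [x y|[u v] /= uv]; [rewrite geq_max => -> -> | apply: ranks_le].
Qed.

Lemma schmidt_rank_le1 n (phi : qstate R n) (A : {set 'I_n}) : (n <= 1)%N ->
  (schmidt_rank phi A <= 1)%N.
Proof.
move=> n_le1; rewrite schmidt_rank_coef_mx.
have := cardsC A; rewrite card_ord => cardA.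
have [A0|A_gt0] := posnP #|A|.
  apply: leq_trans (rank_leq_row _) _.
  by rewrite card_ffun card_bool card_sig (eq_card (B := A)) // A0.
apply: leq_trans (rank_leq_col _) _.
rewrite card_ffun card_bool card_sig (eq_card (B := ~: A)) //.
by rewrite (_ : #|~: A| = 0%N) //; lia.
Qed.

Lemma log2_nat_ge0 k : 0 <= log2 (k%:R : R).
Proof.
rewrite /log2; case: k => [|k]; first by rewrite ln0 // mul0r.
by apply: divr_ge0; [apply: ln_ge0; rewrite ler1n | apply/ltW/ln_gt0; rewrite ltr1n].
Qed.

Lemma log2_nat_le1 k : (k <= 1)%N -> log2 (k%:R : R) = 0.
Proof.
case: k => [|[|//]] _; rewrite /log2; first by rewrite ln0 ?mul0r.
by rewrite ln1 mul0r.
Qed.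

Lemma log2_nat_le j k : (j <= k)%N -> log2 (j%:R : R) <= log2 (k%:R : R).
Proof.
case: j => [|j] jk; first by rewrite log2_nat_le1 ?log2_nat_ge0.
rewrite /log2; apply: ler_wpM2r.
  by rewrite invr_ge0; apply/ltW/ln_gt0; rewrite ltr1n.
by rewrite ler_ln ?ler_nat // posrE ltr0n //; lia.
Qed.

Lemma chi_wd_ge0 N (psi : qstate R N) : 0 <= chi_wd psi.
Proof. exact: log2_nat_ge0. Qed.

Lemma chi_wd_le1 n (phi : qstate R n) : (n <= 1)%N -> chi_wd phi = 0.
Proof.
move=> n_le1; apply: log2_nat_le1.
have [ach|no_tree] := pselect (exists k, width_achievable phi k); last by rewrite min_width_eq0.
have [m [adj [lab [_ <-]]]] := min_width_achieved ach.
by apply: tree_width_le => // u v _; apply: schmidt_rank_le1.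
Qed.

(* Restrict an optimal tree of [psi] to the qubits [f i]. *)
Lemma min_width_restrict N n (psi : qstate R N) (phi : qstate R n) (f : 'I_n -> 'I_N) :
  injective f -> (1 < n)%N ->
  (forall A : {set 'I_N}, schmidt_rank phi [set i | f i \in A] <= schmidt_rank psi A)%N ->
  (min_width phi <= min_width psi)%N.
Proof.
move=> inj_f n_gt1 ranks_le.
have N_gt1 : (1 < N)%N by have := leq_card f inj_f; rewrite !card_ord; lia.
have [m0 [adj0 [lab0 tree0]]] := exists_subcubic_tree N_gt1.
have [m [adj [lab [tree <-]]]] : width_achievable psi (min_width psi).
  by apply: min_width_achieved; exists (tree_width psi adj0 lab0), m0, adj0, lab0.
have [m' [adj' [lab' [tree' sides']]]] := restrict_subcubic_tree tree inj_f n_gt1.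
apply: leq_trans (min_width_le (k := tree_width phi adj' lab') _) _.
  by exists m', adj', lab'.
apply: tree_width_le (tree_width_ge1 _ _ _) _ => x y /sides' [u [v [uv ->]]].
exact: leq_trans (ranks_le _) (schmidt_rank_le_tree_width _ _ uv).
Qed.

Lemma chi_wd_le_of_schmidt_rank N n (psi : qstate R N) (phi : qstate R n) (f : 'I_n -> 'I_N) :
  injective f ->
  (forall A : {set 'I_N}, schmidt_rank phi [set i | f i \in A] <= schmidt_rank psi A)%N ->
  chi_wd phi <= chi_wd psi.
Proof.
move=> inj_f ranks_le; have [n_gt1|n_le1] := ltnP 1 n.
  exact/log2_nat_le/(min_width_restrict inj_f n_gt1 ranks_le).
by rewrite chi_wd_le1 ?chi_wd_ge0.
Qed.

Lemma chi_wd_slocc N n (psi : qstate R N) (phi : qstate R n) :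
  slocc_convertible psi phi -> chi_wd phi <= chi_wd psi.
Proof.
case=> f [P [inj_f _ [Op _ [_ branch_eq]]]]; apply: (chi_wd_le_of_schmidt_rank inj_f) => A.
apply: leq_trans (schmidt_rank_embed phi A inj_f) _.
by rewrite -branch_eq schmidt_rank_branch_state.
Qed.

Lemma chi_wd_branch_state N (Op : {ffun 'I_N -> 'M[R[i]]_2}) (psi : qstate R N) :
  chi_wd (branch_state Op psi) <= chi_wd psi.
Proof.
apply: (chi_wd_le_of_schmidt_rank (f := id)) => // A.
rewrite (_ : [set i | id i \in A] = A) ?schmidt_rank_branch_state //.
by apply/setP => i; rewrite inE.
Qed.

Lemma chi_wd_typeI : typeI_monotone (@chi_wd R).
Proof.
move=> N psi P normed valid.
have /(congr1 (fun x => x * chi_wd psi)) := sum_branch_prob valid psi.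
rewrite normed mul1r big_distrl /= (bigID (fun Op => 0 < branch_prob Op psi)) /= => <-.
rewrite -[X in X <= _]addr0 lerD ?ler_sum // => [Op _|].
  by rewrite ler_wpM2l ?branch_prob_ge0 ?chi_wd_branch_state.
by rewrite sumr_ge0 // => Op _; rewrite mulr_ge0 ?branch_prob_ge0 ?chi_wd_ge0.
Qed.

Lemma chi_wd_typeII : typeII_monotone (@chi_wd R).
Proof.
move=> N n psi phi _ _ _ [f [P [inj_f valid sum1]]]; apply: chi_wd_slocc.
have : has (fun Op => (0 < branch_prob Op psi) && `[< branch_state Op psi = embed f phi >])
    (branches P).
  apply/negPn/negP => none; move: sum1; rewrite big_hasC // => /eqP.
  by rewrite eq_sym oner_eq0.
case/hasP => Op inP /andP [p_gt0 /asboolP branch_eq].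
by exists f, P; split=> //; exists Op.
Qed.

End SchmidtRankWidth.

Theorem theorem4 (R : realType) :
  (forall (N n : nat) (psi : qstate R N) (psi' : qstate R n),
      (n <= N)%N -> normalized psi -> normalized psi' ->
      slocc_convertible psi psi' ->
      chi_wd psi >= chi_wd psi')
  /\ typeI_monotone (@chi_wd R)
  /\ typeII_monotone (@chi_wd R).
Proof.
split; first by move=> N n psi psi' _ _ _; apply: chi_wd_slocc.
by split; [apply: chi_wd_typeI | apply: chi_wd_typeII].
Qed.
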